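(* Let $(M,\vec\lambda,\mathcal R\oplus\xi)$ be a uniform $q$-contact manifold with adapted coframe $\lambda_1,\dots,\lambda_q$ and Reeb vector fields $R_1,\dots,R_q$, let $H\in C^\infty(M)$ with Hamiltonian vector field $X_H$, and let $Y$ be a vector field on $M$ with $\mathcal L_YX_H=0$ and $\lambda_1(Y)=\cdots=\lambda_q(Y)$. Then: (i) $\lambda_1(Y)$ is a dissipated quantity of $X_H$, i.e. $X_H(\lambda_1(Y))=-\lambda_1(Y)\sum_{k=1}^qR_k(H)$; (ii) $Y(H)=0$ if and only if $(\mathcal L_Y\lambda_i)(X_H)=0$ for all $i=1,\dots,q$.
   Context: A $q$-contact structure on a $(2n+q)$-dimensional manifold $M$ is a collection of pointwise linearly independent nowhere-vanishing $1$-forms $\lambda_1,\dots,\lambda_q$ with a splitting $TM=\mathcal R\oplus\xi$ such that $\xi=\bigcap_i\ker\lambda_i$, each $d\lambda_i|_\xi$ is non-degenerate, and $\ker d\lambda_i=\mathcal R$ for each $i$; it is uniform if $d\lambda_i=d\lambda_1$ for all $i$. The Reeb vector fields $R_1,\dots,R_q$ are the unique vector fields tangent to and spanning $\mathcal R$ with $\lambda_i(R_j)=\delta_i^j$. For $H\in C^\infty(M)$, the Hamiltonian vector field $X_H$ is the unique vector field with $\lambda_i(X_H)=-H$ for all $i$ and $i_{X_H}d\lambda_1=dH-\sum_{k=1}^q dH(R_k)\lambda_k$. A function $f$ is a dissipated quantity of $X_H$ if $X_H(f)=-f\sum_{k=1}^qR_k(H)$. A vector field $Y$ with $\mathcal L_YX_H=[Y,X_H]=0$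 is called a dynamical symmetry of $X_H$. *)

(* Algebraic (Cartan-calculus) model of a q-contact manifold:
   A     = the algebra C^oo(M) of smooth real functions (an R-algebra),
   vector fields = derivations of A,
   1-forms = A-linear maps from vector fields to A,
   d, Lie derivative, contraction given by the standard Koszul/Cartan formulas. *)
From HB Require Import structures.
From mathcomp Require Import all_boot all_order all_algebra.
From mathcomp Require Import reals.
Set Implicit Arguments. Unset Strict Implicit. Unset Printing Implicit Defensive.
Import Order.TTheory GRing.Theory Num.Theory.
Local Open Scope ring_scope.

Section QContact.
Variables (R : realType) (A : comAlgType R).

Definition derivation (X : A -> A) : Prop :=
  [/\ forall a b, X (a + b) = X a + X b,
      forall a b, X (a * b) = a * X b + X a * b
    & forall (c : R) a, X (c *: a) = c *: X a].

Definition vf_zero : A -> A := fun _ => 0.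
Definition vf_add (X Y : A -> A) : A -> A := fun a => X a + Y a.
Definition vf_scale (f : A) (X : A -> A) : A -> A := fun a => f * X a.
Definition lie_bracket (X Y : A -> A) : A -> A := fun a => X (Y a) - Y (X a).

Definition one_form (lam : (A -> A) -> A) : Prop :=
  (forall X Y, derivation X -> derivation Y -> lam (vf_add X Y) = lam X + lam Y) /\
  (forall f X, derivation X -> lam (vf_scale f X) = f * lam X).

Definition dform (lam : (A -> A) -> A) (X Y : A -> A) : A :=
  X (lam Y) - Y (lam X) - lam (lie_bracket X Y).

Definition lie_deriv_form (Y : A -> A) (lam : (A -> A) -> A) (X : A -> A) : A :=
  Y (lam X) - lam (lie_bracket Y X).

Definition distribution (S : (A -> A) -> Prop) : Prop :=
  [/\ forall X, S X -> derivation X, S vf_zero,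
      forall X Y, S X -> S Y -> S (vf_add X Y)
    & forall f X, S X -> S (vf_scale f X)].

Definition q_contact (q : nat) (lam : 'I_q -> (A -> A) -> A)
  (Rd xi : (A -> A) -> Prop) : Prop :=
  [/\ forall i, one_form (lam i),
      distribution Rd /\ distribution xi,
      (forall X, derivation X -> exists r s, [/\ Rd r, xi s & X = vf_add r s]) /\
      (forall X, Rd X -> xi X -> X = vf_zero),
      (forall X, derivation X -> (xi X <-> forall i, lam i X = 0)) /\
      (forall i X, xi X -> (forall Z, xi Z -> dform (lam i) X Z = 0) -> X = vf_zero)
    &
      (forall i X, derivation X ->
         ((forall Z, derivation Z -> dform (lam i) X Z = 0) <-> Rd X))].

Definition uniform (q : nat) (lam : 'I_q -> (A -> A) -> A) : Prop :=
  forall i j X Z, derivation X -> derivation Z ->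
    dform (lam i) X Z = dform (lam j) X Z.

Definition reeb_fields (q : nat) (lam : 'I_q -> (A -> A) -> A)
  (Rd : (A -> A) -> Prop) (Rf : 'I_q -> A -> A) : Prop :=
  [/\ forall j, Rd (Rf j),
      forall X, Rd X -> exists f : 'I_q -> A, X = (fun a => \sum_k f k * Rf k a)
    & forall i j, lam i (Rf j) = (i == j)%:R].

(* X is the Hamiltonian vector field of H (i1 is the index of lam_1) *)
Definition hamiltonian_vf (q : nat) (lam : 'I_q -> (A -> A) -> A)
  (Rf : 'I_q -> A -> A) (i1 : 'I_q) (H : A) (X : A -> A) : Prop :=
  [/\ derivation X,
      forall i, lam i X = - H
    & forall Z, derivation Z ->
        dform (lam i1) X Z = Z H - \sum_k Rf k H * lam k Z].

Definition dissipated (q : nat) (Rf : 'I_q -> A -> A) (H : A) (XH : A -> A) (f : A) : Prop :=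
  XH f = - (f * \sum_k Rf k H).

End QContact.

(* Both parts come from evaluating the defining identities on the commuting pair
   (X_H, Y): since [X_H, Y] = 0 and lam_i(X_H) = -H, the Koszul formulas reduce to
   d lam_1(X_H, Y) = X_H(lam_1 Y) + Y H and (L_Y lam_i)(X_H) = -Y H.  Comparing the
   first with the Hamiltonian equation at Z = Y, where all lam_k(Y) agree, gives (i);
   the second gives (ii). *)
From HB Require Import structures.
From mathcomp Require Import all_boot all_order all_algebra.
From mathcomp Require Import boolp reals.
Set Implicit Arguments. Unset Strict Implicit. Unset Printing Implicit Defensive.
Import Order.TTheory GRing.Theory Num.Theory.
Local Open Scope ring_scope.

Section VectorFields.
Variables (R : realType) (A : comAlgType R).
Implicit Types (X Y : A -> A) (lam : (A -> A) -> A).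

Lemma derivation_vf_zero : derivation (@vf_zero R A).
Proof. by split=> *; rewrite /vf_zero ?addr0 ?mulr0 ?mul0r ?addr0 ?scaler0. Qed.

Lemma derivationN X : derivation X -> forall a, X (- a) = - X a.
Proof.
case=> Xadd _ _ a.
have X0 : X 0 = 0 by apply: (@addrI _ (X 0)); rewrite -Xadd !addr0.
by apply: (@addrI _ (X a)); rewrite -Xadd !subrr X0.
Qed.

Lemma one_form_vf_zero lam : one_form lam -> lam (@vf_zero R A) = 0.
Proof.
case=> lam_add _.
have zeroD : vf_add (@vf_zero R A) (@vf_zero R A) = @vf_zero R A.
  by apply: funext => a; rewrite /vf_add /vf_zero addr0.
have := lam_add _ _ derivation_vf_zero derivation_vf_zero.
by rewrite zeroD => lam0D; apply: (@addrI _ (lam (@vf_zero R A))); rewrite -lam0D addr0.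
Qed.

Lemma lie_bracket_eq0_sym X Y :
  lie_bracket X Y = @vf_zero R A -> lie_bracket Y X = @vf_zero R A.
Proof.
move=> XY0; apply: funext => a; have := congr1 (fun F => F a) XY0.
by rewrite /lie_bracket /vf_zero => XY0a; rewrite -opprB XY0a oppr0.
Qed.

Lemma dform_commuting lam X Y : one_form lam -> lie_bracket X Y = @vf_zero R A ->
  dform lam X Y = X (lam Y) - Y (lam X).
Proof. by move=> lam_form XY0; rewrite /dform XY0 one_form_vf_zero // subr0. Qed.

Lemma lie_deriv_form_commuting lam X Y : one_form lam -> lie_bracket Y X = @vf_zero R A ->
  lie_deriv_form Y lam X = Y (lam X).
Proof. by move=> lam_form YX0; rewrite /lie_deriv_form YX0 one_form_vf_zero // subr0. Qed.

End VectorFields.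

Section HamiltonianSymmetries.
Variables (R : realType) (A : comAlgType R) (q : nat).
Variables (lam : 'I_q -> (A -> A) -> A) (Rf : 'I_q -> A -> A) (i1 : 'I_q).
Variables (H : A) (XH Y : A -> A).
Hypotheses (XH_ham : hamiltonian_vf lam Rf i1 H XH) (Y_der : derivation Y).
Hypothesis YXH0 : lie_bracket Y XH = @vf_zero R A.

Lemma symmetry_lie_deriv_form i :
  one_form (lam i) -> lie_deriv_form Y (lam i) XH = - Y H.
Proof.
case: XH_ham => _ lamXH _ lam_form.
by rewrite lie_deriv_form_commuting // lamXH (derivationN Y_der).
Qed.

Lemma symmetry_dissipated f : one_form (lam i1) ->
  (forall k, lam k Y = f) -> dissipated Rf H XH f.
Proof.
case: XH_ham => _ lamXH ham_eq lam_form lamY.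
have XHY0 := lie_bracket_eq0_sym YXH0.
have := ham_eq Y Y_der.
rewrite dform_commuting // lamXH (derivationN Y_der) opprK lamY.
under eq_bigr => k _ do rewrite lamY mulrC.
by rewrite -mulr_sumr addrC => /addrI.
Qed.

End HamiltonianSymmetries.

Theorem proposition3 (R : realType) (A : comAlgType R) (q : nat) (hq : (0 < q)%N)
  (lam : 'I_q -> (A -> A) -> A) (Rd xi : (A -> A) -> Prop) (Rf : 'I_q -> A -> A)
  (H : A) (XH Y : A -> A) :
  let i1 := Ordinal hq in
  q_contact lam Rd xi ->
  uniform lam ->
  reeb_fields lam Rd Rf ->
  hamiltonian_vf lam Rf i1 H XH ->
  derivation Y ->
  lie_bracket Y XH = vf_zero (A:=A) ->
  (forall i, lam i Y = lam i1 Y) ->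
  dissipated Rf H XH (lam i1 Y) /\
  (Y H = 0 <-> forall i, lie_deriv_form Y (lam i) XH = 0).
Proof.
move=> i1 [lam_form _ _ _ _] _ _ XH_ham Y_der YXH0 lamY.
have LY i := symmetry_lie_deriv_form XH_ham Y_der YXH0 (lam_form i).
split; first exact: (symmetry_dissipated XH_ham Y_der YXH0 (lam_form i1) lamY).
split=> [YH0 i | LY0]; first by rewrite LY YH0 oppr0.
by apply/eqP; rewrite -oppr_eq0 -(LY i1) LY0.
Qed.
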